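(* Let $F$ be a field whose characteristic is not $2$, and let $k\geq 4$ be an integer. (i) Let $x\in F$. If the characteristic of $F$ is not $3$ or $x\neq 0$, then $x$ can be written as $x=a_1+\cdots+a_k$ with $a_1,\ldots,a_k\in F$ and $a_1a_2\cdots a_k=-1$. (ii) If the characteristic of $F$ is not $3$, then every $x\in F$ can be written as $x=a_1+\cdots+a_k$ with $a_1,\ldots,a_k\in F$ and $a_1a_2\cdots a_k=1$. *)

From mathcomp Require Import all_boot all_algebra.
Set Implicit Arguments. Unset Strict Implicit. Unset Printing Implicit Defensive.

From mathcomp Require Import all_boot all_algebra.
From mathcomp Require Import ring.
Import GRing.Theory.
Local Open Scope ring_scope.

(* Four terms suffice: with y != 0, the families (2/y, -2/y, y/2, y/2) and
   (3/(2y), -3/(2y), 4y/3, -y/3) have sum y and products -1 and 1, while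
   (1, 1, -1, -1) and (-3, 1/6, 3/2, 4/3) have sum 0 and products 1 and -1.
   Longer sums are obtained by padding with ones, which shifts the sum and
   keeps the product.  In characteristic 3 the only value not reached with
   product -1 this way is x = k - 4; for k >= 6 it is 2 = -1 - 1 + 4 padded by
   ones, and for k = 5 it is 1 = -5, the sum of five -1's. *)

Section SumWithProduct.

Variable F : fieldType.

Definition sum_with_prod (k : nat) (c x : F) :=
  exists a : 'I_k -> F, x = \sum_(i < k) a i /\ \prod_(i < k) a i = c.

Lemma sum_with_prod0 : sum_with_prod 0 1 0.
Proof. by exists (fun=> 0); rewrite !big_ord0. Qed.

Lemma sum_with_prod_cons {k c x} b :
  sum_with_prod k c x -> sum_with_prod k.+1 (b * c) (b + x).
Proof.
case=> a [-> <-]; exists (fun i => if unlift ord0 i is Some j then a j else b).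
rewrite !big_ord_recl unlift_none.
by split; [congr (_ + _) | congr (_ * _)]; apply: eq_bigr => i _; rewrite liftK.
Qed.

Lemma sum_with_prod_eq {k c c' x x'} :
  sum_with_prod k c x -> c = c' -> x = x' -> sum_with_prod k c' x'.
Proof. by move=> skx <- <-. Qed.

Lemma sum_with_prod4 (a0 a1 a2 a3 c x : F) :
  a0 * a1 * a2 * a3 = c -> a0 + a1 + a2 + a3 = x -> sum_with_prod 4 c x.
Proof.
move=> <- <-; refine (sum_with_prod_eq (sum_with_prod_cons a0
  (sum_with_prod_cons a1 (sum_with_prod_cons a2 (sum_with_prod_cons a3
  sum_with_prod0)))) _ _); ring.
Qed.

Lemma sum_with_prod_padl n k c x :
  sum_with_prod k c x -> sum_with_prod (n + k) c (n%:R + x).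
Proof.
elim: n => [|n IHn] skx; first by rewrite add0r.
refine (sum_with_prod_eq (sum_with_prod_cons 1 (IHn skx)) (mul1r c) _).
by rewrite mulrS addrA.
Qed.

Lemma sum_with_prod_ge m k c x :
  (forall y, sum_with_prod m c y) -> (m <= k)%N -> sum_with_prod k c x.
Proof.
move=> smc /subnK <-; rewrite -[x](subrKC ((k - m)%:R)).
exact: sum_with_prod_padl.
Qed.

Hypothesis two_neq0 : 2%:R != 0 :> F.

Lemma sum_with_prod4_N1_neq0 y : y != 0 -> sum_with_prod 4 (-1) y.
Proof.
move=> y0; apply: (@sum_with_prod4 (2 / y) (- (2 / y)) (y / 2) (y / 2));
  by field; rewrite two_neq0 y0.
Qed.

Section CharNot3.

Hypothesis three_neq0 : 3%:R != 0 :> F.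

Lemma sum_with_prod4_1_neq0 y : y != 0 -> sum_with_prod 4 1 y.
Proof.
move=> y0; apply: (@sum_with_prod4 (3%:R / (2 * y)) (- (3%:R / (2 * y)))
  (4%:R * y / 3%:R) (- (y / 3%:R))); by field; rewrite two_neq0 ?three_neq0 y0.
Qed.

Lemma sum_with_prod4_N1_0 : sum_with_prod 4 (-1) 0.
Proof.
have six_neq0 : 6%:R != 0 :> F by rewrite (natrM F 2 3) mulf_neq0.
apply: (@sum_with_prod4 (- 3%:R) (1 / 6%:R) (3%:R / 2) (4%:R / 3%:R));
  by field; rewrite ?two_neq0 ?three_neq0 ?six_neq0.
Qed.

Lemma sum_with_prod_N1 k x : (4 <= k)%N -> sum_with_prod k (-1) x.
Proof.
apply: sum_with_prod_ge => y; have [->|] := eqVneq y 0.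
  exact: sum_with_prod4_N1_0.
exact: sum_with_prod4_N1_neq0.
Qed.

Lemma sum_with_prod_1 k x : (4 <= k)%N -> sum_with_prod k 1 x.
Proof.
apply: sum_with_prod_ge => y; have [->|] := eqVneq y 0; last first.
  exact: sum_with_prod4_1_neq0.
by apply: (@sum_with_prod4 1 1 (-1) (-1)); ring.
Qed.

End CharNot3.

Lemma sum_with_prod5_N1_1 : 3%:R = 0 :> F -> sum_with_prod 5 (-1) 1.
Proof.
move=> three0; refine (sum_with_prod_eq (sum_with_prod_cons (-1)
  (@sum_with_prod4 (-1) (-1) (-1) (-1) 1 (- 4%:R) _ _)) _ _); try ring.
by transitivity (1 - 2%:R * 3%:R : F); [ring | rewrite three0 mulr0 subr0].
Qed.

Lemma sum_with_prod_N1_pchar3 k x :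
  3%:R = 0 :> F -> x != 0 -> (4 <= k)%N -> sum_with_prod k (-1) x.
Proof.
move=> three0 x0 /subnK <-; move: (k - 4)%N => n.
have [xn|] := eqVneq x n%:R; last first.
  rewrite -subr_eq0 => y0; rewrite -[x](subrKC n%:R).
  exact/sum_with_prod_padl/sum_with_prod4_N1_neq0.
rewrite {x}xn in x0 *; case: n x0 => [|[|n] _]; first by rewrite eqxx.
  exact: sum_with_prod5_N1_1.
rewrite -[n.+2]addn2 -addnA natrD; apply: sum_with_prod_padl.
have four_neq0 : 4%:R != 0 :> F by rewrite (natrM F 2 2) mulf_neq0.
refine (sum_with_prod_eq (sum_with_prod_cons (-1) (sum_with_prod_cons (-1)
  (@sum_with_prod4_N1_neq0 4%:R four_neq0))) _ _); ring.
Qed.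

End SumWithProduct.

Theorem theorem1p2 (F : fieldType) (k : nat) :
  (2 \notin [pchar F])%N -> (4 <= k)%N ->
  (forall x : F, ((3 \notin [pchar F])%N \/ x != 0) ->
     exists a : 'I_k -> F, x = \sum_(i < k) a i /\ \prod_(i < k) a i = -1)
  /\
  ((3 \notin [pchar F])%N ->
     forall x : F,
     exists a : 'I_k -> F, x = \sum_(i < k) a i /\ \prod_(i < k) a i = 1).
Proof.
rewrite !inE /= => two_neq0 k_ge4.
split=> [x three_neq0_or_x_neq0 | three_neq0 x].
  have [three0 | three_neq0] := eqVneq (3%:R : F) 0.
    apply: sum_with_prod_N1_pchar3 => //.
    by case: three_neq0_or_x_neq0 => //; rewrite three0 eqxx.
  exact: sum_with_prod_N1.
exact: sum_with_prod_1.
Qed.
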